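(* No vector $(x_\alpha,\dots,x_1)$ with $\alpha\ge3$ and $x_{\alpha-2}=1$ is realizable.
   Context: All graphs are finite, nonempty, and reflexive (every vertex has a loop). $N[v]$ is the closed neighborhood of $v$ (including $v$). For distinct $v,w$, $w$ strictly corners $v$ if $N[v]\subsetneq N[w]$; $v$ is then a strict corner. Corner ranking: set $G^{(1)}=G$, $k=1$. If $G^{(k)}$ is a clique, give all its vertices rank $k$ and stop. Else if $G^{(k)}$ has no strict corners, give all its vertices rank $\infty$ and stop. Else give every strict corner of $G^{(k)}$ rank $k$, delete them to get $G^{(k+1)}$ (induced subgraph), increase $k$ and repeat. The corner rank is the largest rank of a vertex; $X_k$ is the set of rank-$k$ vertices; cop-win graphs are exactly those of finite corner rank. A vector is a finite list of positive integers; the rank cardinality vector of a graph of corner rank $\alpha$ is $(x_\alpha,\dots,x_1)$ with $x_k=|X_k|$; a vector is realizable if it is the rank cardinality vector of some cop-win graph. *)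

From mathcomp Require Import all_boot.
Set Implicit Arguments. Unset Strict Implicit. Unset Printing Implicit Defensive.

(* A graph is a finite type T with an adjacency relation [adj]; the theorem
   assumes [adj] symmetric and reflexive (every vertex has a loop), and T
   nonempty.  Induced subgraphs are represented by vertex sets S : {set T}. *)
Section CornerRank.
Variables (T : finType) (adj : rel T).

(* closed neighbourhood of v in the induced subgraph on S
   (contains v when adj is reflexive and v \in S) *)
Definition nbhd (S : {set T}) (v : T) : {set T} := [set w in S | adj v w].

Definition strictly_corners (S : {set T}) (w v : T) : bool :=
  [&& w \in S, v \in S, w != v & nbhd S v \proper nbhd S w].

Definition strict_corner (S : {set T}) (v : T) : bool :=
  [exists w, strictly_corners S w v].

Definition corners (S : {set T}) : {set T} := [set v | strict_corner S v].

Definition is_clique (S : {set T}) : bool :=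
  [forall u in S, forall v in S, adj u v].

(* stage k of the corner ranking: G^(k) for k >= 1 (G^(0) = G^(1) = G is a
   harmless convention).  Once a clique is reached, the next stage is empty;
   if a non-clique stage has no strict corners, the stages stay constant. *)
Fixpoint stage (k : nat) : {set T} :=
  match k with
  | 0 => setT
  | 1 => setT
  | k'.+1 => let S := stage k' in
             if is_clique S then set0 else S :\: corners S
  end.

(* X_k : the set of vertices of rank k (k >= 1, finite ranks only) *)
Definition rank_set (k : nat) : {set T} :=
  let S := stage k in if is_clique S then S else corners S.

Definition corner_rank_is (alpha : nat) : Prop :=
  0 < alpha /\ stage alpha != set0 /\ is_clique (stage alpha).

End CornerRank.

Definition is_vector (xs : seq nat) : bool := all (fun x => 0 < x) xs.

(* xs = (x_alpha, ..., x_1) is the rank cardinality vector of some cop-win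
   (finite corner rank) finite nonempty reflexive graph *)
Definition realizable (xs : seq nat) : Prop :=
  exists (T : finType) (adj : rel T),
    [/\ symmetric adj, reflexive adj, 0 < #|T| &
      exists alpha, corner_rank_is adj alpha /\ size xs = alpha /\
        forall i, i < alpha -> nth 0 xs i = #|rank_set adj (alpha - i)| ].

From mathcomp Require Import all_boot.

Set Implicit Arguments.
Unset Strict Implicit.
Unset Printing Implicit Defensive.

(* Suppose x_(alpha-2) = 1, i.e. the stage S = G^(alpha-2) has a single strict
   corner v, H = S - v is not a clique, and H minus its strict corners is the
   final clique.  A vertex w cornering v in S dominates every neighbour of v,
   and each strict corner of H must be adjacent to v (otherwise it would be a
   second strict corner of S); a non-corner y of H lying above w is then
   adjacent to all of H.  Since H is not a clique, no vertex dominates S, so w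
   misses some x in H, which is also not adjacent to v; but then y strictly
   corners x in S (w witnesses strictness), contradicting uniqueness of v. *)

Section Corners.
Variables (T : finType) (adj : rel T).
Implicit Types (S : {set T}) (u v w x y z : T).

Lemma in_nbhd S x t : (t \in nbhd adj S x) = (t \in S) && adj x t.
Proof. by rewrite inE. Qed.

Lemma strictly_cornersI S y x z :
  x \in S -> y \in S -> nbhd adj S x \subset nbhd adj S y ->
  z \in nbhd adj S y -> z \notin nbhd adj S x -> strictly_corners adj S y x.
Proof.
move=> xS yS sub_xy zy zx; rewrite /strictly_corners xS yS.
have -> : y != x by apply: contraNneq zx => <-.
by apply/properP; split=> //; exists z.
Qed.

Lemma dominating_strictly_corners S y x z :
  y \in S -> {in S, forall t, adj y t} ->
  x \in S -> z \in S -> ~~ adj x z -> strictly_corners adj S y x.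
Proof.
move=> yS y_dom xS zS xz; apply: (strictly_cornersI (z := z)) => //.
- by apply/subsetP => t; rewrite !inE => /andP [tS _]; rewrite tS y_dom.
- by rewrite inE zS y_dom.
- by rewrite inE zS.
Qed.

Lemma exists_noncorner_above S x : x \in S ->
  exists y, [/\ y \in S, ~~ strict_corner adj S y &
                nbhd adj S x \subset nbhd adj S y].
Proof.
move=> xS.
pose above y := (y \in S) && (nbhd adj S x \subset nbhd adj S y).
have above_x : above x by rewrite /above xS subxx.
case: (arg_maxnP (fun y => #|nbhd adj S y|) above_x) => y /andP [yS xy] y_max.
exists y; split=> //; apply/existsP => -[z /and4P [zS _ _ yz]].
have := y_max z; rewrite /above zS (subset_trans xy (proper_sub yz)) => /(_ isT).
by rewrite /= leqNgt proper_card.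
Qed.

Lemma strict_corner_setD1 S u v :
  ~~ adj u v -> strict_corner adj (S :\ v) u -> strict_corner adj S u.
Proof.
move=> uv /existsP [z /and4P [zH uH zu uz]]; apply/existsP; exists z.
rewrite /strictly_corners (subsetP (subD1set S v) z zH).
rewrite (subsetP (subD1set S v) u uH) zu /=.
have -> : nbhd adj S u = nbhd adj (S :\ v) u.
  apply/setP => t; rewrite !inE; case: (eqVneq t v) => [->|] //.
  by rewrite (negbTE uv) andbF.
apply: (proper_sub_trans uz); apply/subsetP => t.
by rewrite !inE => /andP [/andP [_ ->] ->].
Qed.

Lemma not_clique_nonadjacent S :
  ~~ is_clique adj S -> exists a b, [/\ a \in S, b \in S & ~~ adj a b].
Proof.
by case/forall_inPn => a aS /forall_inPn [b bS ab]; exists a, b.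
Qed.

End Corners.

Section UniqueCorner.
Variables (T : finType) (adj : rel T).
Hypotheses (adj_sym : symmetric adj) (adj_refl : reflexive adj).
Variables (S : {set T}) (v : T).
Hypothesis corners_S : corners adj S = [set v].
Let H := S :\ v.
Let H_sub_S : {subset H <= S} := subsetP (subD1set S v).

Lemma strict_corner_eq u : strict_corner adj S u -> u = v.
Proof. by move=> u_corner; apply/set1P; rewrite -corners_S inE. Qed.

Lemma strict_corner_setD1_adj u :
  strict_corner adj H u -> adj u v.
Proof.
move=> uH_corner; apply/negPn/negP => uv.
have /strict_corner_eq u_v := strict_corner_setD1 uv uH_corner.
case/existsP: uH_corner => z /and4P [_ + _ _].
by rewrite u_v !inE eqxx.
Qed.

Lemma cornering_vertex : exists2 w, w \in H & nbhd adj S v \subset nbhd adj S w.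
Proof.
have : v \in corners adj S by rewrite corners_S set11.
rewrite inE => /existsP [w /and4P [wS _ wv /proper_sub vw]].
by exists w; rewrite // !inE wv.
Qed.

Lemma dominating_in_setD1 :
  is_clique adj (H :\: corners adj H) ->
  exists2 y, y \in H & {in H, forall t, adj y t}.
Proof.
move=> clique; have [w wH vw] := cornering_vertex.
have [y [yH y_noncorner wy]] := exists_noncorner_above adj wH.
exists y => // t tH; case: (boolP (strict_corner adj H t)) => [t_corner|t_noncorner].
  have wt : adj w t.
    have := subsetP vw t; rewrite !in_nbhd adj_sym strict_corner_setD1_adj //.
    by rewrite (H_sub_S tH) => /(_ isT) /andP [].
  by have := subsetP wy t; rewrite !in_nbhd tH wt => /(_ isT) /andP [].
have noncorner s : s \in H -> ~~ strict_corner adj H s -> s \in H :\: corners adj H.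
  by move=> sH s_noncorner; rewrite in_setD sH inE s_noncorner.
move/forall_inP: clique => /(_ y (noncorner y yH y_noncorner)) /forall_inP.
by apply; apply: noncorner.
Qed.

Lemma no_dominating_vertex y :
  ~~ is_clique adj H -> y \in S -> ~ {in S, forall t, adj y t}.
Proof.
move=> /(not_clique_nonadjacent (adj := adj)) [a [b [aH bH ab]]] yS y_dom.
have /strict_corner_eq a_v : strict_corner adj S a.
  apply/existsP; exists y.
  exact: dominating_strictly_corners y_dom (H_sub_S aH) (H_sub_S bH) ab.
by move: aH; rewrite a_v !inE eqxx.
Qed.

Lemma unique_corner_setD1_not_clique :
  ~~ is_clique adj H -> ~~ is_clique adj (H :\: corners adj H).
Proof.
move=> H_nonclique; apply/negP => clique.
have [w wH vw] := cornering_vertex.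
have [y yH y_dom] := dominating_in_setD1 clique.
have [x xS wx] : exists2 x, x \in S & ~~ adj w x.
  apply/exists_inP; apply: contraT => /exists_inPn w_dom; exfalso.
  by apply: (no_dominating_vertex H_nonclique (H_sub_S wH)) => t /w_dom /negPn.
have vx : ~~ adj v x.
  apply: contra wx => vx.
  by have := subsetP vw x; rewrite !in_nbhd xS vx => /(_ isT) /andP [].
have xH : x \in H.
  by rewrite !inE xS andbT; apply: contraNneq vx => ->; exact: adj_refl.
have /strict_corner_eq x_v : strict_corner adj S x.
  apply/existsP; exists y; apply: (strictly_cornersI (z := w)) => //.
  - exact: H_sub_S yH.
  - apply/subsetP => t; rewrite !inE => /andP [tS xt]; rewrite tS y_dom //.
    by rewrite !inE tS andbT; apply: contraNneq vx => <-; rewrite adj_sym.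
  - by rewrite !inE (H_sub_S wH) y_dom.
  - by rewrite !inE adj_sym (negbTE wx) andbF.
by move: xH; rewrite x_v !inE eqxx.
Qed.

End UniqueCorner.

Section Stages.
Variables (T : finType) (adj : rel T).

Lemma stage_not_clique k :
  ~~ is_clique adj (stage adj k.+1) ->
  stage adj k.+2 = stage adj k.+1 :\: corners adj (stage adj k.+1).
Proof. by move=> /negbTE nc; rewrite /= nc. Qed.

Lemma stage_neq0_not_clique k :
  stage adj k.+2 != set0 -> ~~ is_clique adj (stage adj k.+1).
Proof. by apply: contra => c; rewrite /= c. Qed.

Lemma is_clique_set0 : is_clique adj set0.
Proof. by apply/forall_inP => u; rewrite inE. Qed.

End Stages.

Theorem lemma3p20 (xs : seq nat) :
  is_vector xs -> 3 <= size xs -> nth 0 xs 2 = 1 -> ~ realizable xs.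
Proof.
move=> _ size_xs x2 [T [adj [adj_sym adj_refl _ [alpha realized]]]].
case: realized => [[_ [ne cl]] [size_alpha rank]]; subst alpha.
have := rank 2 size_xs; rewrite x2.
have [k size_k] : exists k, size xs = k.+3.
  by exists (size xs - 3); rewrite -addn3 subnK.
rewrite size_k !subSS subn0 in ne cl *.
have nc2 := stage_neq0_not_clique ne.
have nc1 : ~~ is_clique adj (stage adj k.+1).
  apply: stage_neq0_not_clique; apply: contraNneq nc2 => ->; exact: is_clique_set0.
rewrite /rank_set (negbTE nc1) => /esym/eqP/cards1P [v corners_v].
have stage2 : stage adj k.+2 = stage adj k.+1 :\ v.
  by rewrite stage_not_clique // corners_v.
rewrite stage_not_clique // stage2 in cl; rewrite stage2 in nc2.
by move: cl; apply/negP; apply: unique_corner_setD1_not_clique.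
Qed.
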